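(* Let $(\mathbb S,+,\cdot)$ be an S-Ring. Then $\Lambda=\mathbb S_0$, and consequently $(\mathbb S,+,\cdot)$ is Complete Regular.
   Context: An S-Structure is a triple $(\mathbb S,+,\cdot)$ where $\mathbb S$ is a set and $+,\cdot$ are binary operations on $\mathbb S$ such that: $(\mathbb S,+)$ is a commutative group with identity $0$ (the inverse of $s$ is written $-s$, and $s-t:=s+(-t)$); $\mathbb S$ is closed under $\cdot$; and there exists $s\in\mathbb S$ with $0\cdot s\neq 0$ or $s\cdot 0\neq 0$. Multiplication binds tighter than addition. The structures considered come with a distinguished element of $\mathbb S$ denoted $1$. It is Commutative if $s\cdot t=t\cdot s$ for all $s,t$. For a Commutative S-Structure and $\alpha\in\mathbb S$, put $\mathbb S_\alpha=\{s\in\mathbb S:0\cdot s=s\cdot 0=\alpha\}$ and $\Lambda=\{\alpha\in\mathbb S:\mathbb S_\alpha\neq\emptyset\}$. Wheel Distributive: $s\cdot(t+r)+(s\cdot 0)=(s\cdot t)+(s\cdot r)$ for all $s,t,r\in\mathbb S$. S-Associative: for all $m,n\in\mathbb S_0$ and $s\in\mathbb S$, $m\cdot(n\cdot s)=(m\cdot n)\cdot s-([(m-1)\cdot(n-1)]\cdot(0\cdot s))$. Base: if $\mathbb S_0\neq\emptyset$ and $\alpha\in\Lambda$, $q\in\mathbb S_\alpha$ is a Base for $\mathbb S_\alpha$ if $q+\beta\in\mathbb S_\alpha$ for all $\beta\in\mathbb S_0$ and every $s\in\mathbb S_\alpha$ equals $q+\beta$ for some $\beta\in\mathbb S_0$.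 Coordinated: $\mathbb S_0\neq\emptyset$ and every $\mathbb S_\alpha$ with $\alpha\in\Lambda$ has a Base. Standard Bases: a Coordinated Commutative S-Structure has Standard Bases if there is a specified element $q_0(1)\in\mathbb S_1$ which is a Base for $\mathbb S_1$, and for every $\alpha\in\Lambda$ the element $q_0(\alpha):=\alpha\cdot(q_0(1)+1)-1$ lies in $\mathbb S_\alpha$ and is a Base for $\mathbb S_\alpha$. An Essential S-Structure is an S-Structure that is Commutative, Wheel Distributive, S-Associative, has Standard Bases (in particular is Coordinated), satisfies $0,1\in\mathbb S_0$, and satisfies $\mathbb S_0=\{1\cdot x:x\in\mathbb S_0\}$. A Unity is an element $e\in\Lambda$ with $e\cdot s=s\cdot e=s$ for all $s\in\mathbb S$. An S-Ring is an Essential S-Structure which has a Unity. A Commutative S-Structure is Regular if $0\cdot s\in\mathbb S_0$ for every $s\in\mathbb S$, and Complete Regular if it is Regular and for every $\alpha\in\mathbb S_0$ there exists $s\in\mathbb S$ with $0\cdot s=\alpha$. *)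

(* The additive commutative group (S,+) is a zmodType;
   the multiplication "·" is an arbitrary extra binary operation [mul]
   (NOT the ring multiplication), and [one] is the distinguished element 1. *)
From HB Require Import structures.
From mathcomp Require Import all_boot all_algebra.
Set Implicit Arguments. Unset Strict Implicit. Unset Printing Implicit Defensive.
Import GRing.Theory.
Local Open Scope ring_scope.

Section SStructures.
Variables (G : zmodType) (mul : G -> G -> G) (one : G).

(* S-Structure: there exists s with 0·s <> 0 or s·0 <> 0
   (the group and closure conditions are built into the types). *)
Definition is_S_structure : Prop :=
  exists s : G, mul 0 s <> 0 \/ mul s 0 <> 0.

Definition SCommutative : Prop := forall s t : G, mul s t = mul t s.

Definition S_ (alpha : G) (s : G) : Prop := mul 0 s = alpha /\ mul s 0 = alpha.

Definition Lambda (alpha : G) : Prop := exists s, S_ alpha s.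

Definition WheelDistributive : Prop :=
  forall s t r : G, mul s (t + r) + mul s 0 = mul s t + mul s r.

Definition SAssociative : Prop :=
  forall m n s : G, S_ 0 m -> S_ 0 n ->
    mul m (mul n s) = mul (mul m n) s - mul (mul (m - one) (n - one)) (mul 0 s).

Definition is_base (alpha q : G) : Prop :=
  S_ alpha q /\
  (forall beta, S_ 0 beta -> S_ alpha (q + beta)) /\
  (forall s, S_ alpha s -> exists beta, S_ 0 beta /\ s = q + beta).

Definition Coordinated : Prop :=
  (exists x, S_ 0 x) /\ (forall alpha, Lambda alpha -> exists q, is_base alpha q).

Definition q0 (q1 alpha : G) : G := mul alpha (q1 + one) - one.

Definition StandardBases : Prop :=
  Coordinated /\
  exists q1 : G, S_ one q1 /\ is_base one q1 /\
    (forall alpha, Lambda alpha ->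
       S_ alpha (q0 q1 alpha) /\ is_base alpha (q0 q1 alpha)).

Definition Essential : Prop :=
  is_S_structure /\ SCommutative /\ WheelDistributive /\ SAssociative /\
  StandardBases /\ (S_ 0 0 /\ S_ 0 one) /\
  (forall y, S_ 0 y <-> exists x, S_ 0 x /\ y = mul one x).

Definition is_unity (e : G) : Prop :=
  Lambda e /\ forall s, mul e s = s /\ mul s e = s.

Definition S_Ring : Prop := Essential /\ exists e, is_unity e.

Definition Regular : Prop := SCommutative /\ forall s, S_ 0 (mul 0 s).

Definition CompleteRegular : Prop :=
  Regular /\ forall alpha, S_ 0 alpha -> exists s, mul 0 s = alpha.

End SStructures.

(** The unity of an S-Ring is forced to be [1], because [q0(e) = q1] for a
    unity [e].  S-Associativity with [m = 0, n = 1] then gives [0·(0·s) = 0],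
    so every [0·s] lies in [S_0]; with [m = a, n = 0] and [m = 0, n = a] at
    [s = q1], commutativity gives [0·(a·q1) = a] for every [a] in [S_0], so
    [a·q1] is a witness for [a] in [Lambda]. *)
From mathcomp Require Import all_boot all_algebra.
Local Open Scope ring_scope.
Import GRing.Theory.

Section SRingLambda.
Variables (G : zmodType) (mul : G -> G -> G) (one : G).

Lemma q0_unity q1 e : (forall s, mul e s = s) -> q0 mul one q1 e = q1.
Proof. by move=> mul_e; rewrite /q0 mul_e addrK. Qed.

Lemma unity_eq_one q1 e :
  mul 0 q1 = one -> (forall s, mul e s = s) -> S_ mul e (q0 mul one q1 e) ->
  e = one.
Proof. by move=> mul0q1 mul_e [<- _]; rewrite q0_unity. Qed.

Lemma mul0N_eq0 x :
  WheelDistributive mul -> mul 0 0 = 0 -> mul 0 x = 0 -> mul 0 (- x) = 0.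
Proof.
move=> mulWD mul00 mul0x.
by have := mulWD 0 x (- x); rewrite subrr mul00 mul0x !add0r => <-.
Qed.

Hypotheses (mulC : SCommutative mul) (mulWD : WheelDistributive mul)
  (mulA : SAssociative mul one) (S0_0 : S_ mul 0 0) (S0_1 : S_ mul 0 one)
  (mul1s : forall s, mul one s = s).

Lemma muls1 s : mul s one = s.
Proof. by rewrite mulC mul1s. Qed.

Lemma mul0_mul0 s : mul 0 (mul 0 s) = 0.
Proof.
have mulN10 : mul (- one) 0 = 0.
  by rewrite mulC mul0N_eq0 //; [case: S0_0 | case: S0_1].
(* S-Associativity at [m = 0, n = 1] reads [0·s = 0·s - ((-1)·0)·(0·s)]. *)
have := mulA 0 one s S0_0 S0_1.
rewrite mul1s S0_1.1 sub0r subrr mulN10 -[LHS]addr0 => /addrI/eqP.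
by rewrite eq_sym oppr_eq0 => /eqP.
Qed.

Lemma Lambda_S0 alpha : Lambda mul alpha -> S_ mul 0 alpha.
Proof. by move=> [s [<- _]]; split; last rewrite mulC; apply: mul0_mul0. Qed.

Lemma Regular_mul : Regular mul.
Proof. by split=> // s; apply: Lambda_S0; exists s; rewrite /S_ mulC. Qed.

Variable q1 : G.
Hypothesis mul0q1 : mul 0 q1 = one.

Lemma mul0_mul_q1 a : S_ mul 0 a -> mul 0 (mul a q1) = a.
Proof.
move=> S0a.
have mul_a0q1 := mulA a 0 q1 S0a S0_0.
have mul_0aq1 := mulA 0 a q1 S0_0 S0a.
rewrite mul0q1 !muls1 S0a.2 mul0q1 in mul_a0q1.
rewrite S0a.1 mul0q1 muls1 in mul_0aq1.
(* Now [a = 1 - (a - 1)·(-1)] and [0·(a·q1) = 1 - (-1)·(a - 1)]. *)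
by rewrite mul_0aq1 (mulC (0 - one)) -mul_a0q1.
Qed.

Lemma S_mul_q1 a : S_ mul 0 a -> S_ mul a (mul a q1).
Proof. by move=> S0a; split; last rewrite mulC; apply: mul0_mul_q1. Qed.

Lemma Lambda_eq_S0 alpha : Lambda mul alpha <-> S_ mul 0 alpha.
Proof.
by split; [exact: Lambda_S0 | move=> S0a; exists (mul alpha q1); exact: S_mul_q1].
Qed.

Lemma CompleteRegular_mul : CompleteRegular mul.
Proof.
by split; [exact: Regular_mul | move=> a S0a; exists (mul a q1); exact: mul0_mul_q1].
Qed.

End SRingLambda.

Theorem theorem3p2p1 (G : zmodType) (mul : G -> G -> G) (one : G) :
  S_Ring mul one ->
  (forall alpha : G, Lambda mul alpha <-> S_ mul 0 alpha) /\
  CompleteRegular mul.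
Proof.
move=> [[_ [mulC [mulWD [mulA [[_ [q1 [[mul0q1 _] [_ q0_base]]]] [[S0_0 S0_1] _]]]]]]].
move=> [e [Lambda_e unit_e]].
have mul_e s : mul e s = s by case: (unit_e s).
have e_one : e = one by apply: unity_eq_one mul0q1 mul_e (q0_base e Lambda_e).1.
rewrite e_one in mul_e.
by split; [exact: Lambda_eq_S0 mul0q1 | exact: CompleteRegular_mul mul0q1].
Qed.
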